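(* Let $(a,b,c)$ be a cyclic triple, assume (AW), that $(A^b,A^c)$ and $(A^c,A^a)$ are Leonard pairs with eigenvalue orderings $\theta^a_M,\theta^b_M,\theta^c_M$ as in the context. Let $\{|\theta^c_M\rangle\}$ be the eigenbasis of $A^c$ attached to the pair $(A^b,A^c)$, i.e. $A^c|\theta^c_M\rangle=\theta^c_M|\theta^c_M\rangle$ and $A^b|\theta^c_M\rangle=A^{(b,c)}_{M+1,M}|\theta^c_{M+1}\rangle+A^{(b,c)}_{M,M}|\theta^c_M\rangle+A^{(b,c)}_{M-1,M}|\theta^c_{M-1}\rangle$. Then for $0\le M\le 2s$, $$A^a|\theta^c_M\rangle=A^{(a,c)}_{M+1,M}\,\mathfrak h(M)\,|\theta^c_{M+1}\rangle+A^{(a,c)}_{M,M}|\theta^c_M\rangle+A^{(a,c)}_{M-1,M}\,\mathfrak h(M-1)^{-1}|\theta^c_{M-1}\rangle,$$ where $\mathfrak h(k)=q^{4k}\dfrac{\mathsf b^c}{\mathsf c^c}\cdot\dfrac{\mathsf c^cq^{-2k}+r_0q\,\mathsf c^b\mathsf b^a}{\mathsf b^cq^{2k}+r_0q^{-1}\mathsf c^b\mathsf b^a}$ (the last term is absent for $M=0$).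
   Context: $q\in\mathbb C^*$ is not a root of unity, $s\in\{0,\tfrac12,1,\dots\}$, $\mathcal V$ a complex vector space of dimension $2s+1$ with identity $\mathbb I$; $[X,Y]_q=qXY-q^{-1}YX$. Labels range over $\{\cdot,*,\diamond\}$; $A^{\cdot}=A$, $\mathsf b^\cdot=\mathsf b$, $\mathsf c^\cdot=\mathsf c$. Fix nonzero $r_0,\mathsf b^a,\mathsf c^a$ with $r_0^{-2}=\mathsf b\mathsf c=\mathsf b^*\mathsf c^*=\mathsf b^\diamond\mathsf c^\diamond$; $\theta^a_M=\mathsf b^aq^{2M}+\mathsf c^aq^{-2M}$; for distinct $a,b,c$, $\omega^{\{a,b,c\}}=-(q-q^{-1})^2(\theta^a_s\theta^b_s-r_0^{-1}(q^{2s+1}+q^{-2s-1})\theta^c_s)$. For $A,A^*\in\mathrm{End}(\mathcal V)$ set $A^\diamond=\frac{r_0}{q^2-q^{-2}}[A^*,A]_q+\frac{r_0\omega^{\{\cdot,*,\diamond\}}}{(q-q^{-1})(q^2-q^{-2})}\mathbb I$. Hypothesis (AW): for every ordered pair $(a,b)$ of distinct labels, $c$ the remaining one, $[A^a,[A^a,A^b]_q]_{q^{-1}}=-\frac{(q^2-q^{-2})^2}{r_0^2}A^b+\omega^{\{a,b,c\}}A^a+\frac{q+q^{-1}}{r_0}\omega^{\{a,c,b\}}\mathbb I$. A Leonard pair on $\mathcal V$ is a pair of diagonalizable operators such that each has an eigenbasis in which the other is represented by an irreducible tridiagonal matrix; eigenvalue orderings $\theta^x_0,\dots,\theta^x_{2s}$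 are those for which the other operator acts irreducibly tridiagonally on the ordered eigenbasis. A cyclic triple is one of $(\cdot,*,\diamond),( *,\diamond,\cdot),(\diamond,\cdot,* )$. Coefficients: for a cyclic triple $(a,b,c)$, $A^{(b,a)}_{M,M-1}=q^{2-4s}\frac{(1-q^{2M})(\mathsf c^a-\mathsf b^aq^{2M+4s})(\mathsf b^b\mathsf b^cr_0q^{4s-1}+\mathsf b^aq^{2M-2})(\mathsf c^a\mathsf c^cr_0q^{-1}+\mathsf c^bq^{2M-2})}{(\mathsf c^a-\mathsf b^aq^{4M-2})(\mathsf c^a-\mathsf b^aq^{4M})}$, $A^{(b,a)}_{M-1,M}=\frac{(1-q^{2M-4s-2})(\mathsf c^a-\mathsf b^aq^{2M-2})(\mathsf c^a+\mathsf b^b\mathsf b^cr_0q^{2M+4s-1})(\mathsf c^b+\mathsf b^a\mathsf c^cr_0q^{2M-1})}{(\mathsf c^a-\mathsf b^aq^{4M-4})(\mathsf c^a-\mathsf b^aq^{4M-2})}$, $A^{(b,a)}_{M,M}=\theta^b_0-A^{(b,a)}_{M,M+1}-A^{(b,a)}_{M,M-1}$; coefficients with indices outside $\{0,\dots,2s\}$ are $0$. $A^{(a,b)}_{M,N}$ is the image of $A^{(b,a)}_{M,N}$ under $\mathsf b^a\leftrightarrow\mathsf b^b$, $\mathsf c^a\leftrightarrow\mathsf c^b$, $\mathsf b^c\mapsto q^{-4s}\mathsf c^c$, $\mathsf c^c\mapsto q^{4s}\mathsf b^c$. This defines $A^{(x,y)}$ for all six ordered pairs of distinct labels (in particular $A^{(b,c)}$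 is obtained from the cyclic triple $(b,c,a)$ and $A^{(a,c)}$ from $(c,a,b)$). The eigenbasis of $A^c$ attached to the Leonard pair $(A^b,A^c)$ exists (it is determined up to an overall nonzero scalar). *)

From HB Require Import structures.
From mathcomp Require Import all_boot all_order all_algebra.
From mathcomp Require Import complex reals.
Set Implicit Arguments. Unset Strict Implicit. Unset Printing Implicit Defensive.
Import Order.TTheory GRing.Theory Num.Theory.
Local Open Scope ring_scope.

Inductive label := Ldot | Lstar | Ldia.

Definition label_eqb (x y : label) : bool :=
  match x, y with
  | Ldot, Ldot | Lstar, Lstar | Ldia, Ldia => true
  | _, _ => false end.
Lemma label_eqP : Equality.axiom label_eqb.
Proof. by case; case; constructor. Qed.
HB.instance Definition _ := hasDecEq.Build label label_eqP.

(* cyclic successor: cyclic triples are (dot,star,dia), (star,dia,dot), (dia,dot,star) *)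
Definition lnext (x : label) : label :=
  match x with Ldot => Lstar | Lstar => Ldia | Ldia => Ldot end.

Definition third (x y : label) : label :=
  match x, y with
  | Ldot, Lstar | Lstar, Ldot => Ldia
  | Ldot, Ldia | Ldia, Ldot => Lstar
  | _, _ => Ldot end.

Section Defs.
Variable R : realType.
Local Notation C := R[i].
Variables (q r0 : C) (bb cc : label -> C) (n : nat). (* n = 2s *)

Definition theta (x : label) (M : int) : C :=
  bb x * q ^ (2 * M) + cc x * q ^ (- (2 * M)).

Definition theta_s (x : label) : C := bb x * q ^+ n + cc x * q ^- n.

(* omega^{ {a,b,c} } with a,b symmetric, c distinguished *)
Definition omega (a b c : label) : C :=
  - (q - q^-1) ^+ 2 *
  (theta_s a * theta_s b - r0^-1 * (q ^+ n.+1 + q ^- n.+1) * theta_s c).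

Definition qcomm (p : C) (X Y : 'M[C]_n.+1) : 'M[C]_n.+1 :=
  p *: (X *m Y) - p^-1 *: (Y *m X).

Definition Aop (A Ast : 'M[C]_n.+1) (x : label) : 'M[C]_n.+1 :=
  match x with
  | Ldot => A
  | Lstar => Ast
  | Ldia => (r0 / (q ^+ 2 - q ^- 2)) *: qcomm q Ast A
            + (r0 * omega Ldot Lstar Ldia / ((q - q^-1) * (q ^+ 2 - q ^- 2)))%:M
  end.

Definition AW (A Ast : 'M[C]_n.+1) : Prop :=
  forall x y : label, x != y ->
    qcomm q^-1 (Aop A Ast x) (qcomm q (Aop A Ast x) (Aop A Ast y)) =
      (- (q ^+ 2 - q ^- 2) ^+ 2 / r0 ^+ 2) *: Aop A Ast y
      + omega x y (third x y) *: Aop A Ast x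
      + ((q + q^-1) / r0 * omega x (third x y) y)%:M.

Definition irr_tridiag (T : 'M[C]_n.+1) : Prop :=
  forall i j : 'I_n.+1,
    ((i.+1 < j)%N \/ (j.+1 < i)%N -> T i j = 0) /\
    ((i.+1 == j)%N || (j.+1 == i)%N -> T i j != 0).

Definition leonard_pair_ord (X Y : 'M[C]_n.+1) (thX thY : int -> C) : Prop :=
  (exists P : 'M[C]_n.+1, P \in unitmx /\
     X *m P = P *m diag_mx (\row_(i < n.+1) thX (Posz i)) /\
     irr_tridiag (invmx P *m Y *m P)) /\
  (exists Q : 'M[C]_n.+1, Q \in unitmx /\
     Y *m Q = Q *m diag_mx (\row_(i < n.+1) thY (Posz i)) /\
     irr_tridiag (invmx Q *m X *m Q)).

Definition in_range (k : int) : bool := (0 <= k) && (k <= n%:Z).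

(* Coefficients A^{(b,a)} for a cyclic triple (a,b,c), as functions of the
   parameters (b^a,c^a,b^b,c^b,b^c,c^c).  4s = 2n. *)
Definition coef_low (ba ca b_b cb bc c_c : C) (M : int) : C := (* A_{M,M-1} *)
  q ^ (2 - 2 * n%:Z) *
  ((1 - q ^ (2 * M)) * (ca - ba * q ^ (2 * M + 2 * n%:Z))
   * (b_b * bc * r0 * q ^ (2 * n%:Z - 1) + ba * q ^ (2 * M - 2))
   * (ca * c_c * r0 * q ^ (-1) + cb * q ^ (2 * M - 2)))
  / ((ca - ba * q ^ (4 * M - 2)) * (ca - ba * q ^ (4 * M))).

Definition coef_upp (ba ca b_b cb bc c_c : C) (M : int) : C := (* A_{M-1,M} *)
  ((1 - q ^ (2 * M - 2 * n%:Z - 2)) * (ca - ba * q ^ (2 * M - 2))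
   * (ca + b_b * bc * r0 * q ^ (2 * M + 2 * n%:Z - 1))
   * (cb + ba * c_c * r0 * q ^ (2 * M - 1)))
  / ((ca - ba * q ^ (4 * M - 4)) * (ca - ba * q ^ (4 * M - 2))).

Definition coef_BA (ba ca b_b cb bc c_c : C) (i j : int) : C :=
  let low := fun M => if in_range M && in_range (M - 1)
                      then coef_low ba ca b_b cb bc c_c M else 0 in
  let upp := fun M => if in_range M && in_range (M - 1)
                      then coef_upp ba ca b_b cb bc c_c M else 0 in
  if ~~ (in_range i && in_range j) then 0
  else if i == j + 1 then low i
  else if i + 1 == j then upp j
  else if i == j then (b_b + cb) - upp (i + 1) - low i
         (* theta^b_0 - A_{M,M+1} - A_{M,M-1} *)
  else 0.

(* A^{(y,x)}_{i,j} for distinct labels x,y: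
   - if (x,y,z) is a cyclic triple it is A^{(b,a)} with (a,b,c) = (x,y,z);
   - otherwise (y,x,z) is a cyclic triple and it is A^{(a,b)} with
     (a,b,c) = (y,x,z), obtained by b^a<->b^b, c^a<->c^b,
     b^c |-> q^{-4s} c^c, c^c |-> q^{4s} b^c. *)
Definition Acoef (y x : label) (i j : int) : C :=
  let z := third x y in
  if y == lnext x then coef_BA (bb x) (cc x) (bb y) (cc y) (bb z) (cc z) i j
  else coef_BA (bb x) (cc x) (bb y) (cc y)
               (q ^- (2 * n) * cc z) (q ^+ (2 * n) * bb z) i j.

Definition hfrak (a b c : label) (k : int) : C :=
  q ^ (4 * k) * (bb c / cc c) *
  ((cc c * q ^ (- (2 * k)) + r0 * q * cc b * bb a)
   / (bb c * q ^ (2 * k) + r0 * q^-1 * cc b * bb a)).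

End Defs.

(* the vector |theta_k> = k-th column of P, and 0 for k outside 0..2s *)
Definition vk (F : ringType) (n : nat) (P : 'M[F]_n.+1) (k : int) : 'cV[F]_n.+1 :=
  match k with
  | Posz m => if (m < n.+1)%N then col (inord m) P else 0
  | Negz _ => 0
  end.

From HB Require Import structures.
From mathcomp Require Import all_boot all_order all_algebra.
From mathcomp Require Import complex reals.
From mathcomp Require Import zify ring.
Set Implicit Arguments. Unset Strict Implicit. Unset Printing Implicit Defensive.
Import Order.TTheory GRing.Theory Num.Theory.
Local Open Scope ring_scope.

(* For a cyclic triple, (AW) together with the definition of A^diamond
   expresses A^a as an affine function of the q-commutator [A^c, A^b]_q.
   Applied to an eigenvector of A^c on which A^b acts by a three-term
   recurrence, this yields a three-term recurrence for A^a whose coefficients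
   are those of A^(b,c) multiplied by explicit factors; rational identities in
   q, r0 and the b^x turn these into the coefficients of A^(a,c), rescaled by
   h.  The identities need certain factors to be nonzero; these divide the
   off-diagonal coefficients of A^b in the eigenbasis of A^c, which cannot
   vanish because (A^b, A^c) is a Leonard pair. *)

Section LeonardPairs.
Variable R : realType.
Local Notation C := R[i].
Variable n : nat.
Implicit Types (P Q X Y T : 'M[C]_n.+1).

Lemma vk_col P (i : 'I_n.+1) : vk P (Posz i) = col i P.
Proof. by rewrite /= ltn_ord inord_val. Qed.

Lemma vk_eigen P X (th : int -> C) :
  (forall M : 'I_n.+1, X *m vk P (Posz M) = th (Posz M) *: vk P (Posz M)) ->
  forall k : int, X *m vk P k = th k *: vk P k.
Proof.
move=> hX [m|m]; last by rewrite /= mulmx0 scaler0.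
have [hm|hm] := ltnP m n.+1; first exact: (hX (Ordinal hm)).
by rewrite /= ltnNge hm /= mulmx0 scaler0.
Qed.

Lemma col_unitmx_neq0 P (i : 'I_n.+1) : P \in unitmx -> col i P != 0.
Proof.
move=> uP; apply/eqP => h.
have : delta_mx i 0 = invmx P *m col i P :> 'cV[C]_n.+1 by rewrite colE mulKmx.
rewrite h mulmx0 => /matrixP /(_ i 0); rewrite !mxE !eqxx /=.
by move/eqP; rewrite oner_eq0.
Qed.

Lemma irr_tridiag_eigvec_eq0 T (w : 'cV[C]_n.+1) l :
  irr_tridiag T -> T *m w = l *: w -> w 0 0 = 0 -> w = 0.
Proof.
move=> irr Tw w0.
suff wk : forall k, (k <= n)%N -> forall i : 'I_n.+1, (i <= k)%N -> w i 0 = 0.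
  by apply/matrixP => i j; rewrite (ord1 j) mxE; apply: (wk n) => //; rewrite -ltnS.
elim=> [|k IH] kn i ik.
  by have -> : i = 0 by apply/val_inj => /=; lia.
have [ilk|ki] := leqP i k; first by apply: IH => //; lia.
have -> : i = inord k.+1 by apply/val_inj; rewrite /= inordK; lia.
set k' : 'I_n.+1 := inord k.
have k'E : (k' : nat) = k by rewrite /k' inordK // ltnS ltnW.
have k1E : ((inord k.+1 : 'I_n.+1) : nat) = k.+1 by rewrite inordK.
have Tkk1 : T k' (inord k.+1) != 0.
  by case: (irr k' (inord k.+1)) => _; apply; rewrite k'E k1E eqxx.
move/matrixP/(_ k' 0): Tw; rewrite !mxE (IH (ltnW kn) k') ?k'E // mulr0.
rewrite (bigD1 (inord k.+1)) //= big1 ?addr0.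
  by move/eqP; rewrite mulf_eq0 (negPf Tkk1) => /eqP.
move=> j jk1; have [jlk|kj] := leqP j k; first by rewrite (IH (ltnW kn)) ?mulr0.
have jk2 : (k.+1 < j)%N.
  rewrite ltn_neqAle kj andbT; apply: contraNneq jk1 => h.
  by apply/eqP/val_inj; rewrite /= k1E.
by case: (irr k' j) => Tz _; rewrite Tz ?mul0r // k'E; left.
Qed.

Lemma irr_tridiag_eigvec_prop T (u v : 'cV[C]_n.+1) l :
  irr_tridiag T -> T *m u = l *: u -> T *m v = l *: v -> v 0 0 *: u = u 0 0 *: v.
Proof.
move=> irr Tu Tv; apply/eqP; rewrite -subr_eq0; apply/eqP.
apply: (irr_tridiag_eigvec_eq0 (l := l) irr); last by rewrite !mxE mulrC subrr.
by rewrite mulmxBr -!scalemxAr Tu Tv !scalerBr !scalerA (mulrC l) (mulrC l).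
Qed.

Lemma eigval_inj_of_irr_tridiag P1 P X (th : 'I_n.+1 -> C) :
  P1 \in unitmx -> irr_tridiag (invmx P1 *m X *m P1) -> P \in unitmx ->
  (forall M : 'I_n.+1, X *m col M P = th M *: col M P) -> injective th.
Proof.
move=> uP1 irr uP hX i j thij.
pose u k := invmx P1 *m col k P.
have Tu k : invmx P1 *m X *m P1 *m u k = th k *: u k.
  by rewrite -!mulmxA mulKVmx // hX scalemxAr.
have u00 k : u k 0 0 != 0.
  apply: contra_neq (col_unitmx_neq0 k uP) => /(irr_tridiag_eigvec_eq0 irr (Tu k)) u0.
  by rewrite -(mulKVmx uP1 (col k P)) -/(u k) u0 mulmx0.
have := irr_tridiag_eigvec_prop irr (Tu i); rewrite thij => /(_ _ (Tu j)).
move: (u00 j); set uj := u j 0 0; set ui := u i 0 0 => uj0.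
move/(congr1 (mulmx P1)); rewrite -!scalemxAr !mulKVmx //.
move/(congr1 (mulmx (invmx P))); rewrite -!scalemxAr !colE !mulKmx //.
move/matrixP/(_ i 0); rewrite !mxE !eqxx /= mulr1.
case: (eqVneq i j) => // nij; rewrite mulr0 => uj00.
by rewrite uj00 eqxx in uj0.
Qed.

Lemma eigbasis_coord Q P X (th : int -> C) :
  Q \in unitmx -> X *m Q = Q *m diag_mx (\row_(i < n.+1) th (Posz i)) ->
  injective (fun i : 'I_n.+1 => th (Posz i)) -> P \in unitmx ->
  (forall M : 'I_n.+1, X *m col M P = th (Posz M) *: col M P) ->
  forall (k : int) (i : 'I_n.+1),
    (invmx Q *m vk P k) i 0 = (k == Posz i)%:R * (invmx Q *m vk P (Posz i)) i 0.
Proof.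
move=> uQ XQ th_inj uP hX k i.
have QX : invmx Q *m X = diag_mx (\row_(i < n.+1) th (Posz i)) *m invmx Q.
  by rewrite -[invmx Q *m X](mulmxK uQ) -(mulmxA (invmx Q) X Q) XQ mulKmx.
case: (eqVneq k (Posz i)) => [-> | ki]; first by rewrite mul1r.
rewrite mul0r; case: k ki => [m|m] ki; last by rewrite /= mulmx0 mxE.
have [hm|hm] := ltnP m n.+1; last by rewrite /= ltnNge hm /= mulmx0 mxE.
have : (diag_mx (\row_(i < n.+1) th (Posz i)) *m invmx Q *m col (Ordinal hm) P) i 0
       = (th (Posz m) *: (invmx Q *m col (Ordinal hm) P)) i 0.
  by rewrite -QX -mulmxA hX -scalemxAr.
rewrite -mulmxA mul_diag_mx !mxE -vk_col /= => /eqP; rewrite -subr_eq0 -mulrBl mulf_eq0.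
case/orP=> [|/eqP //]; rewrite subr_eq0 => /eqP /(th_inj i (Ordinal hm)) iE.
by move: ki; rewrite iE eqxx.
Qed.

Lemma leonard_offdiag_neq0 X Y P (thX thY : int -> C) (co : int -> int -> C) :
  leonard_pair_ord Y X thY thX -> P \in unitmx ->
  (forall M : 'I_n.+1, X *m vk P (Posz M) = thX (Posz M) *: vk P (Posz M)) ->
  (forall M : 'I_n.+1, Y *m vk P (Posz M) =
     co (Posz M + 1) (Posz M) *: vk P (Posz M + 1)
   + co (Posz M) (Posz M) *: vk P (Posz M)
   + co (Posz M - 1) (Posz M) *: vk P (Posz M - 1)) ->
  forall j : nat, (j < n)%N ->
    co (Posz j + 1) (Posz j) != 0 /\ co (Posz j.+1 - 1) (Posz j.+1) != 0.
Proof.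
move=> [[P1 [uP1 [_ irrT]]] [Q [uQ [XQ irrS]]]] uP hX hY j jn.
have hXc M : X *m col M P = thX (Posz M) *: col M P by rewrite -vk_col hX.
have thX_inj := eigval_inj_of_irr_tridiag uP1 irrT uP hXc.
pose W k := invmx Q *m vk P k.
have WE : forall k (i : 'I_n.+1), W k i 0 = (k == Posz i)%:R * W (Posz i) i 0.
  exact: eigbasis_coord uQ XQ thX_inj uP hXc.
have W_neq0 (M : 'I_n.+1) : W (Posz M) M 0 != 0.
  apply: contra_neq (col_unitmx_neq0 M uP) => WM0.
  have W0 : W (Posz M) = 0.
    apply/matrixP => i l; rewrite (ord1 l) [RHS]mxE WE.
    case: eqP => [[Mi]|_]; last by rewrite mul0r.
    have -> : i = M by apply/val_inj; rewrite /= Mi.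
    by rewrite mul1r.
  by rewrite -vk_col -(mulKVmx uQ (vk P _)) -/(W _) W0 mulmx0.
pose S := invmx Q *m Y *m Q.
have {}irrS : irr_tridiag S by [].
have SW (M : 'I_n.+1) : S *m W (Posz M) =
     co (Posz M + 1) (Posz M) *: W (Posz M + 1)
   + co (Posz M) (Posz M) *: W (Posz M)
   + co (Posz M - 1) (Posz M) *: W (Posz M - 1).
  by rewrite /S /W -!mulmxA mulKVmx // hY !mulmxDr -!scalemxAr.
clearbody W S.
have SWE (M i : 'I_n.+1) : (S *m W (Posz M)) i 0 = S i M * W (Posz M) M 0.
  rewrite mxE (bigD1 M) //= big1 ?addr0 // => l lM.
  rewrite WE; case: eqP => [[Ml]|_]; last by rewrite mul0r mulr0.
  by move: lM; rewrite (_ : l = M) ?eqxx //; apply/val_inj; rewrite /= Ml.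
set j0 : 'I_n.+1 := inord j; set j1 : 'I_n.+1 := inord j.+1.
have j0E : (j0 : nat) = j by rewrite inordK // ltnS ltnW.
have j1E : (j1 : nat) = j.+1 by rewrite inordK.
have S10 : S j1 j0 != 0 by case: (irrS j1 j0) => _; apply; rewrite j0E j1E eqxx orbT.
have S01 : S j0 j1 != 0 by case: (irrS j0 j1) => _; apply; rewrite j0E j1E eqxx.
split.
- move: (SW j0) => /matrixP/(_ j1 0); rewrite SWE !mxE.
  rewrite (WE (Posz j0 + 1)) (WE (Posz j0) j1) (WE (Posz j0 - 1)).
  have [-> -> ->] : [/\ Posz j0 + 1 == Posz j1, Posz j0 == Posz j1 = false
                      & Posz j0 - 1 == Posz j1 = false].
    by rewrite j0E j1E; split; apply/eqP; lia.
  rewrite !mul0r !mulr0 !addr0 mul1r => E.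
  have -> : Posz j = Posz j0 by rewrite j0E.
  by apply: contraTneq (mulf_neq0 S10 (W_neq0 j0)) => c0; rewrite E c0 mul0r eqxx.
- move: (SW j1) => /matrixP/(_ j0 0); rewrite SWE !mxE.
  rewrite (WE (Posz j1 + 1)) (WE (Posz j1) j0) (WE (Posz j1 - 1)).
  have [-> -> ->] : [/\ Posz j1 + 1 == Posz j0 = false, Posz j1 == Posz j0 = false
                      & Posz j1 - 1 == Posz j0].
    by rewrite j0E j1E; split; apply/eqP; lia.
  rewrite !mul0r !mulr0 !add0r mul1r => E.
  have -> : Posz j.+1 = Posz j1 by rewrite j1E.
  by apply: contraTneq (mulf_neq0 S01 (W_neq0 j1)) => c0; rewrite E c0 mul0r eqxx.
Qed.

End LeonardPairs.

Lemma neq0_scale (F : fieldType) (g x y : F) : x = y * g -> x != 0 -> y != 0.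
Proof. by move=> ->; apply: contraNneq => ->; rewrite mul0r. Qed.

(* Side conditions of [field] are normal forms of denominators; each is
   proved by matching it, up to a rational identity, with a hypothesis. *)
Ltac neq0_by_field := repeat (apply/andP; split); rewrite ?expf_neq0 //;
  match goal with H : is_true (?x != 0) |- is_true (?y != 0) =>
    apply: (@neq0_scale _ 1 _ _ _ H); by field end.

Lemma alg_qcomm_qcommV (F : fieldType) (A : algType F) (p : F) (X Y : A) :
  p != 0 -> let qc r U V := r *: (U * V) - r^-1 *: (V * U) in
  qc p X (qc p Y X) = - qc p^-1 X (qc p X Y).
Proof.
move=> p0 /=; rewrite invrK !(mulrBr, mulrBl) -!(scalerAl, scalerAr) !mulrA.
rewrite !scalerBr !scalerA mulfV // mulVf // !scale1r.
move: (X * Y * X) (X * X * Y) (Y * X * X) (p * p) (p^-1 / p) => u v w a c.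
by rewrite !opprB addrACA [RHS]addrACA [- w + _]addrC.
Qed.

Section QCommutator.
Variable R : realType.
Local Notation C := R[i].
Variable n : nat.
Implicit Types (X Y : 'M[C]_n.+1).

Lemma qcommV (p : C) X Y : qcomm p X Y = - qcomm p^-1 Y X.
Proof. by rewrite /qcomm invrK opprB. Qed.

Lemma qcomm_qcommV (p : C) X Y : p != 0 ->
  qcomm p X (qcomm p Y X) = - qcomm p^-1 X (qcomm p X Y).
Proof. exact: alg_qcomm_qcommV. Qed.

Lemma qcomm_affinel (p k g : C) X Y :
  qcomm p (k *: X + g%:M) Y = k *: qcomm p X Y + (g * (p - p^-1)) *: Y.
Proof.
rewrite /qcomm mulmxDl mulmxDr -!scalemxAl -!scalemxAr mul_scalar_mx mul_mx_scalar.
move: (X *m Y) (Y *m X) => XY YX.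
by apply/matrixP => i j; rewrite !mxE; ring.
Qed.

Lemma qcomm_affiner (p k g : C) X Y :
  qcomm p Y (k *: X + g%:M) = k *: qcomm p Y X + (g * (p - p^-1)) *: Y.
Proof.
by rewrite qcommV qcomm_affinel opprD -scalerN -qcommV invrK -scaleNr -mulrN opprB.
Qed.

Lemma qcomm_three_term (q k g : C) X Y (v1 v0 vm : 'cV[C]_n.+1)
    (t1 t0 tm al be de : C) :
  X *m v1 = t1 *: v1 -> X *m v0 = t0 *: v0 -> X *m vm = tm *: vm ->
  Y *m v0 = al *: v1 + be *: v0 + de *: vm ->
  (k *: qcomm q X Y + g%:M) *m v0 =
    (k * (q * t1 - q^-1 * t0) * al) *: v1 + (k * (q - q^-1) * t0 * be + g) *: v0
  + (k * (q * tm - q^-1 * t0) * de) *: vm.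
Proof.
move=> h1 h0 hm hY.
rewrite mulmxDl mul_scalar_mx -scalemxAl /qcomm mulmxBl -!scalemxAl -!mulmxA hY h0.
rewrite -scalemxAr hY !mulmxDr -!scalemxAr h1 h0 hm.
by apply/matrixP => i j; rewrite !mxE; ring.
Qed.

(* For the triple (dot, star, dia) this is the definition of A^dia; for the
   two other cyclic triples it is (AW) for the pairs (star, dot), (dot, star). *)
Lemma Aop_cyclic_qcomm (q r0 : C) (bb cc : label -> C) (A Ast : 'M[C]_n.+1)
    (a : label) :
  q != 0 -> r0 != 0 -> q ^+ 2 - 1 != 0 -> q ^+ 4 - 1 != 0 -> AW q r0 bb cc A Ast ->
  Aop q r0 bb cc A Ast a =
    (r0 / (q ^+ 2 - q ^- 2)) *:
      qcomm q (Aop q r0 bb cc A Ast (lnext (lnext a))) (Aop q r0 bb cc A Ast (lnext a))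
    + (r0 * omega q r0 bb cc n (lnext a) (lnext (lnext a)) a
       / ((q - q^-1) * (q ^+ 2 - q ^- 2)))%:M.
Proof.
move=> qn0 r0n0 q2 q4 hAW; case: a => //=.
- rewrite qcomm_affinel qcommV (hAW Lstar Ldot isT) /=.
  apply/matrixP => i j; rewrite !mxE /omega; case: eqP => _; rewrite ?mulr1n ?mulr0n.
    by field; neq0_by_field.
  by field; neq0_by_field.
- rewrite qcomm_affiner (qcomm_qcommV _ _ qn0) (hAW Ldot Lstar isT) /=.
  apply/matrixP => i j; rewrite !mxE /omega; case: eqP => _; rewrite ?mulr1n ?mulr0n.
    by field; neq0_by_field.
  by field; neq0_by_field.
Qed.

End QCommutator.

Section CoefBA.
Variable R : realType.
Variables (q r0 : R[i]) (n : nat) (ba ca b_b cb bc c_c : R[i]).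
Local Notation cB := (coef_BA q r0 n ba ca b_b cb bc c_c).
Local Notation cL := (coef_low q r0 n ba ca b_b cb bc c_c).
Local Notation cU := (coef_upp q r0 n ba ca b_b cb bc c_c).

Ltac unfold_coef_BA :=
  rewrite /coef_BA /in_range; repeat (case: ifP => //=); move=> *; try (exfalso; lia).

Lemma coef_BA_sub (m : nat) : (m < n)%N -> cB (Posz m + 1) (Posz m) = cL (Posz m + 1).
Proof. by move=> mn; unfold_coef_BA. Qed.

Lemma coef_BA_super (m : nat) :
  (m < n)%N -> cB (Posz m.+1 - 1) (Posz m.+1) = cU (Posz m.+1).
Proof. by move=> mn; unfold_coef_BA. Qed.

Lemma coef_BA_diag (m : nat) : (m <= n)%N -> cB (Posz m) (Posz m) =
  b_b + cb - (if (m < n)%N then cU (Posz m + 1) else 0)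
           - (if (0 < m)%N then cL (Posz m) else 0).
Proof. by move=> mn; unfold_coef_BA. Qed.

Lemma coef_BA_out i j : ~~ (in_range n i && in_range n j) -> cB i j = 0.
Proof. by rewrite /coef_BA => /negPf ->. Qed.

End CoefBA.

Section CoefficientIdentities.
Variable R : realType.
Local Notation C := R[i].
Variables (q r0 : C) (bb cc : label -> C) (n : nat) (a b c : label).
Hypotheses (qn0 : q != 0) (r0n0 : r0 != 0) (bbn0 : forall x, bb x != 0).
Hypotheses (q2 : q ^+ 2 - 1 != 0) (q4 : q ^+ 4 - 1 != 0).
Hypothesis ccE : forall x, cc x = r0^-2 / bb x.

Let low_bc := coef_low q r0 n (bb c) (cc c) (bb b) (cc b)
                       (q ^- (2 * n) * cc a) (q ^+ (2 * n) * bb a).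
Let upp_bc := coef_upp q r0 n (bb c) (cc c) (bb b) (cc b)
                       (q ^- (2 * n) * cc a) (q ^+ (2 * n) * bb a).
Let low_ac := coef_low q r0 n (bb c) (cc c) (bb a) (cc a) (bb b) (cc b).
Let upp_ac := coef_upp q r0 n (bb c) (cc c) (bb a) (cc a) (bb b) (cc b).
Let K := r0 / (q ^+ 2 - q ^- 2).
Let gamma := r0 * omega q r0 bb cc n b c a / ((q - q^-1) * (q ^+ 2 - q ^- 2)).
Let th := theta q bb cc c.
Let h := hfrak q r0 bb cc a b c.

(* Up to unit factors, the [dq k] are the denominators and the [ep x y m]
   some numerator factors of [low_bc], [upp_bc], [low_ac], [upp_ac], [h]. *)
Local Notation dq k := (1 - r0 ^+ 2 * bb c ^+ 2 * q ^+ k).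
Local Notation ep x y m := (bb x + r0 * q ^+ (2 * m + 1) * bb y * bb c).

(* Substitute [cc x = r0^-2 / bb x] and expand every power of [q] into
   products of [q], [q ^+ m] and [q ^+ n], so that [field] sees a rational
   function of [q, q ^+ m, q ^+ n, r0] and the [bb x]. *)
Ltac qnorm := rewrite ?ccE;
  rewrite ?(@mulr_natl int) ?(@mulrS int) ?mulr0n ?addr0 ?opprD ?opprK;
  rewrite ?(expfzDr _ _ qn0) -?invr_expz ?expr1z -?exprnP;
  rewrite -?mul2n ?mul2n -?addnn ?exprD ?exprS ?expr0.

(* As [neq0_by_field], up to a unit factor. *)
Ltac neq0_from_hyp := match goal with H : is_true (?x != 0) |- is_true (?y != 0) =>
   first [ apply: (@neq0_scale _ 1 _ _ _ H); by field; atoms_neq0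
         | apply: (@neq0_scale _ (q * q)^-1 _ _ _ H); by field; atoms_neq0
         | apply: (@neq0_scale _ (q * q) _ _ _ H); by field; atoms_neq0
         | apply: (@neq0_scale _ (r0 ^+ 2 * bb c)^-1 _ _ _ H); by field; atoms_neq0
         | apply: (@neq0_scale _ (r0 * q * bb a)^-1 _ _ _ H); by field; atoms_neq0
         | apply: (@neq0_scale _ (r0 ^+ 2 * bb a * bb c)^-1 _ _ _ H);
             by field; atoms_neq0 ] end
with atoms_neq0 := rewrite ?bbn0 ?r0n0 ?qn0 ?expf_neq0 //.
Ltac split_andP :=
  repeat match goal with H : is_true (_ && _) |- _ => case/andP: H => ? ? end.
Ltac field_sides := repeat (apply/andP; split); atoms_neq0; try neq0_from_hyp.

Lemma coef_low_rescale (m : nat) :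
  dq (4 * m + 2) != 0 -> dq (4 * m + 4) != 0 -> ep a b m != 0 ->
  K * (q * th (Posz m + 1) - q^-1 * th (Posz m)) * low_bc (Posz m + 1)
  = low_ac (Posz m + 1) * h (Posz m).
Proof.
rewrite /low_bc /low_ac /K /th /h /coef_low /theta /hfrak; qnorm => H1 H2 H3.
by field; field_sides.
Qed.

Lemma coef_upp_rescale (m : nat) :
  dq (4 * m) != 0 -> dq (4 * m + 2) != 0 -> ep b a m != 0 -> ep a b m != 0 ->
  K * (q * th (Posz m.+1 - 1) - q^-1 * th (Posz m.+1)) * upp_bc (Posz m.+1)
  = upp_ac (Posz m.+1) / h (Posz m.+1 - 1).
Proof.
rewrite /upp_bc /upp_ac /K /th /h /coef_upp /theta /hfrak; qnorm => H1 H2 H3 H4.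
by field; field_sides.
Qed.

Lemma coef_diag_rescale (m : nat) :
  dq (4 * m + 2) != 0 -> dq (4 * m + 4) != 0 -> dq (4 * m + 6) != 0 ->
  K * (q - q^-1) * th (Posz m.+1) *
    (bb b + cc b - upp_bc (Posz m.+1 + 1) - low_bc (Posz m.+1)) + gamma
  = bb a + cc a - upp_ac (Posz m.+1 + 1) - low_ac (Posz m.+1).
Proof.
rewrite /upp_bc /upp_ac /low_bc /low_ac /gamma /omega /theta_s /K /th.
rewrite /coef_low /coef_upp /theta; qnorm => H1 H2 H3.
by field; field_sides.
Qed.

Lemma coef_diag_rescale_first :
  dq 0 != 0 -> dq 2 != 0 ->
  K * (q - q^-1) * th (Posz 0) * (bb b + cc b - upp_bc (Posz 0 + 1) - 0) + gamma
  = bb a + cc a - upp_ac (Posz 0 + 1) - 0.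
Proof.
rewrite /upp_bc /upp_ac /gamma /omega /theta_s /K /th /coef_upp /theta.
qnorm => H1 H2.
by field; field_sides.
Qed.

Lemma coef_diag_rescale_last :
  1 - r0 ^+ 2 * bb c ^+ 2 * q ^+ (4 * n) / q ^+ 2 != 0 -> dq (4 * n) != 0 ->
  K * (q - q^-1) * th (Posz n) * (bb b + cc b - 0 - low_bc (Posz n)) + gamma
  = bb a + cc a - 0 - low_ac (Posz n).
Proof.
rewrite /low_bc /low_ac /gamma /omega /theta_s /K /th /coef_low /theta.
qnorm => H1 H2.
by field; field_sides.
Qed.

Lemma coef_diag_rescale_dim1 : n = 0%N ->
  K * (q - q^-1) * th (Posz 0) * (bb b + cc b - 0 - 0) + gamma = bb a + cc a - 0 - 0.
Proof.
move=> n0; rewrite /gamma /omega /theta_s /K /th /theta n0; qnorm.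
by field; field_sides.
Qed.

Lemma low_bc_factors_neq0 (m : nat) : low_bc (Posz m + 1) != 0 ->
  [/\ dq (4 * m + 2) != 0, dq (4 * m + 4) != 0 & ep b a m != 0].
Proof.
rewrite /low_bc /coef_low; qnorm => H.
rewrite !mulf_eq0 !invr_eq0 ?mulf_eq0 !negb_or in H.
by split_andP; split; neq0_from_hyp.
Qed.

Lemma upp_bc_factors_neq0 (m : nat) : upp_bc (Posz m.+1) != 0 ->
  [/\ dq (4 * m) != 0, dq (4 * m + 2) != 0 & ep a b m != 0].
Proof.
rewrite /upp_bc /coef_upp; qnorm => H.
rewrite !mulf_eq0 !invr_eq0 ?mulf_eq0 !negb_or in H.
by split_andP; split; neq0_from_hyp.
Qed.

Hypotheses (hb : b = lnext a) (hc : c = lnext b).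
Hypothesis Abc_offdiag_neq0 : forall j : nat, (j < n)%N ->
  Acoef q r0 bb cc n b c (Posz j + 1) (Posz j) != 0 /\
  Acoef q r0 bb cc n b c (Posz j.+1 - 1) (Posz j.+1) != 0.

Let Acoef_bcE i j : Acoef q r0 bb cc n b c i j =
  coef_BA q r0 n (bb c) (cc c) (bb b) (cc b)
          (q ^- (2 * n) * cc a) (q ^+ (2 * n) * bb a) i j.
Proof. by rewrite hc hb; case: (a). Qed.

Let Acoef_acE i j : Acoef q r0 bb cc n a c i j =
  coef_BA q r0 n (bb c) (cc c) (bb a) (cc a) (bb b) (cc b) i j.
Proof. by rewrite hc hb; case: (a). Qed.

Let sub_factors_neq0 (m : nat) : (m < n)%N ->
  [/\ dq (4 * m + 2) != 0, dq (4 * m + 4) != 0 & ep b a m != 0].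
Proof.
move=> mn; apply: low_bc_factors_neq0.
by have [] := Abc_offdiag_neq0 mn; rewrite Acoef_bcE coef_BA_sub.
Qed.

Let super_factors_neq0 (m : nat) : (m < n)%N ->
  [/\ dq (4 * m) != 0, dq (4 * m + 2) != 0 & ep a b m != 0].
Proof.
move=> mn; apply: upp_bc_factors_neq0.
by have [_] := Abc_offdiag_neq0 mn; rewrite Acoef_bcE coef_BA_super.
Qed.

Lemma Acoef_sub_rescale (M : 'I_n.+1) :
  K * (q * th (Posz M + 1) - q^-1 * th (Posz M))
    * Acoef q r0 bb cc n b c (Posz M + 1) (Posz M)
  = Acoef q r0 bb cc n a c (Posz M + 1) (Posz M) * h (Posz M).
Proof.
rewrite Acoef_bcE Acoef_acE; have [Mn|nM] := ltnP M n.
  rewrite !coef_BA_sub //; have [? ? _] := sub_factors_neq0 Mn.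
  by have [_ _ ?] := super_factors_neq0 Mn; apply: coef_low_rescale.
have out : ~~ (in_range n (Posz M + 1) && in_range n (Posz M)).
  by rewrite /in_range; apply/negP; have := ltn_ord M; lia.
by rewrite !coef_BA_out // mulr0 mul0r.
Qed.

Lemma Acoef_super_rescale (M : 'I_n.+1) :
  K * (q * th (Posz M - 1) - q^-1 * th (Posz M))
    * Acoef q r0 bb cc n b c (Posz M - 1) (Posz M)
  = Acoef q r0 bb cc n a c (Posz M - 1) (Posz M) / h (Posz M - 1).
Proof.
rewrite Acoef_bcE Acoef_acE; case: M => [[|m] /= mn].
  by rewrite !coef_BA_out // mulr0 mul0r.
rewrite !coef_BA_super //; have [? ? ?] := super_factors_neq0 mn.
by have [_ _ ?] := sub_factors_neq0 mn; apply: coef_upp_rescale.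
Qed.

Lemma Acoef_diag_rescale (M : 'I_n.+1) :
  K * (q - q^-1) * th (Posz M) * Acoef q r0 bb cc n b c (Posz M) (Posz M) + gamma
  = Acoef q r0 bb cc n a c (Posz M) (Posz M).
Proof.
rewrite Acoef_bcE Acoef_acE; case: M => m /=; rewrite ltnS => mn.
rewrite !(coef_BA_diag _ _ _ _ _ _ _ _ mn); case: m mn => [|m] mn.
  rewrite ltnn; have [n0|n_gt0] := posnP n.
    exact: coef_diag_rescale_dim1.
  have [? ? _] := super_factors_neq0 n_gt0.
  exact: coef_diag_rescale_first.
rewrite ltn0Sn; have [? ? _] := sub_factors_neq0 mn; have [m1n|] := ltnP m.+1 n.
  have [_ h3 _] := super_factors_neq0 m1n; apply: coef_diag_rescale => //.
  by rewrite (_ : (4 * m + 6 = 4 * m.+1 + 2)%N) //; lia.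
move=> nm1; have nE : n = m.+1 by lia.
rewrite -nE; apply: coef_diag_rescale_last.
  rewrite (_ : (4 * n = 4 * m + 2 + 2)%N); last by lia.
  by rewrite exprD mulrA mulfK ?expf_neq0.
by rewrite (_ : (4 * n = 4 * m + 4)%N); last by lia.
Qed.

Lemma Acoef_ac_rescale (M : 'I_n.+1) :
  [/\ K * (q * th (Posz M + 1) - q^-1 * th (Posz M))
        * Acoef q r0 bb cc n b c (Posz M + 1) (Posz M)
       = Acoef q r0 bb cc n a c (Posz M + 1) (Posz M) * h (Posz M),
      K * (q - q^-1) * th (Posz M) * Acoef q r0 bb cc n b c (Posz M) (Posz M) + gamma
       = Acoef q r0 bb cc n a c (Posz M) (Posz M)
    & K * (q * th (Posz M - 1) - q^-1 * th (Posz M))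
        * Acoef q r0 bb cc n b c (Posz M - 1) (Posz M)
       = Acoef q r0 bb cc n a c (Posz M - 1) (Posz M) / h (Posz M - 1)].
Proof.
by split; [apply: Acoef_sub_rescale | apply: Acoef_diag_rescale | apply: Acoef_super_rescale].
Qed.

End CoefficientIdentities.

Theorem lemma3p6 (R : realType) (q r0 : R[i]) (bb cc : label -> R[i]) (n : nat)
  (A Ast : 'M[R[i]]_n.+1) (a b c : label) (P : 'M[R[i]]_n.+1) :
  q != 0 ->
  (forall k : nat, (0 < k)%N -> q ^+ k != 1) ->
  r0 != 0 -> (forall x, bb x != 0) -> (forall x, cc x != 0) ->
  (forall x, r0 ^- 2 = bb x * cc x) ->
  b = lnext a -> c = lnext b ->
  AW q r0 bb cc A Ast ->
  leonard_pair_ord (Aop q r0 bb cc A Ast b) (Aop q r0 bb cc A Ast c)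
    (theta q bb cc b) (theta q bb cc c) ->
  leonard_pair_ord (Aop q r0 bb cc A Ast c) (Aop q r0 bb cc A Ast a)
    (theta q bb cc c) (theta q bb cc a) ->
  P \in unitmx ->
  (forall M : 'I_n.+1,
     Aop q r0 bb cc A Ast c *m vk P (Posz M) = theta q bb cc c (Posz M) *: vk P (Posz M)) ->
  (forall M : 'I_n.+1,
     Aop q r0 bb cc A Ast b *m vk P (Posz M) =
       Acoef q r0 bb cc n b c (Posz M + 1) (Posz M) *: vk P (Posz M + 1)
     + Acoef q r0 bb cc n b c (Posz M) (Posz M) *: vk P (Posz M)
     + Acoef q r0 bb cc n b c (Posz M - 1) (Posz M) *: vk P (Posz M - 1)) ->
  forall M : 'I_n.+1,
    Aop q r0 bb cc A Ast a *m vk P (Posz M) =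
      (Acoef q r0 bb cc n a c (Posz M + 1) (Posz M) * hfrak q r0 bb cc a b c (Posz M))
        *: vk P (Posz M + 1)
    + Acoef q r0 bb cc n a c (Posz M) (Posz M) *: vk P (Posz M)
    + (Acoef q r0 bb cc n a c (Posz M - 1) (Posz M) / hfrak q r0 bb cc a b c (Posz M - 1))
        *: vk P (Posz M - 1).
Proof.
move=> qn0 q_not_root r0n0 bbn0 _ r0bc -> -> hAW LPbc _ uP hAc hAb M.
have ccE x : cc x = r0 ^- 2 / bb x by rewrite (r0bc x) mulrC mulKf.
have q2 : q ^+ 2 - 1 != 0 by rewrite subr_eq0 q_not_root.
have q4 : q ^+ 4 - 1 != 0 by rewrite subr_eq0 q_not_root.
have offdiag := leonard_offdiag_neq0 LPbc uP hAc hAb.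
have hAc' := vk_eigen hAc.
rewrite (Aop_cyclic_qcomm a qn0 r0n0 q2 q4 hAW).
rewrite (qcomm_three_term _ _ _ (hAc' _) (hAc' _) (hAc' _) (hAb M)).
by have [-> -> ->] := Acoef_ac_rescale qn0 r0n0 bbn0 q2 q4 ccE erefl erefl offdiag M.
Qed.
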